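(* Let $(X_k;\leq_k)_{k\in K}$ be a family of pairwise disjoint nonempty posets, and let $X=\bigcup_{k\in K}X_k$ with order $\leq=\bigcup_{k\in K}\leq_k$ (disjoint union of posets). Then the following are equivalent: (i) for each $k\in K$, the space $(X_k;\tau_i(X_k))$ is compact; (ii) $(X;\tau_i(X))$ is compact.
   Context: For a poset $X$ and $x\in X$, $(x]=\{z: z\le x\}$, $[x)=\{z: z\ge x\}$. The interval topology $\tau_i(X)$ on a poset $X$ is the topology with subbase $\{X\setminus (x]: x\in X\}\cup\{X\setminus [x): x\in X\}$. *)

From Stdlib Require Import List Relation_Definitions.
Export ListNotations.

Definition generated_open {T : Type} (S : (T -> Prop) -> Prop) (U : T -> Prop) : Prop :=
  forall x, U x ->
    exists l : list (T -> Prop),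
      (forall V, In V l -> S V) /\
      (forall V, In V l -> V x) /\
      (forall y, (forall V, In V l -> V y) -> U y).

(* Subbase of the interval topology: X \ (a] and X \ [a). *)
Definition interval_subbase {T : Type} (le : T -> T -> Prop) (V : T -> Prop) : Prop :=
  exists a : T,
    (forall z, V z <-> ~ le z a) \/ (forall z, V z <-> ~ le a z).

Definition interval_open {T : Type} (le : T -> T -> Prop) : (T -> Prop) -> Prop :=
  generated_open (interval_subbase le).

Definition compact {T : Type} (open : (T -> Prop) -> Prop) : Prop :=
  forall (I : Type) (U : I -> T -> Prop),
    (forall i, open (U i)) ->
    (forall x : T, exists i, U i x) ->
    exists l : list I, forall x : T, exists i, In i l /\ U i x.

(* Disjoint union of the posets (X k, le k): carrier is the sigma type,
   and p <= q iff they lie in the same component and are related there. *)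
Definition sum_le {K : Type} {X : K -> Type} (le : forall k, X k -> X k -> Prop)
  (p q : {k : K & X k}) : Prop :=
  exists e : projT1 p = projT1 q,
    le (projT1 q) (eq_rect (projT1 p) X (projT2 p) (projT1 q) e) (projT2 q).

From Stdlib Require Import List Relation_Definitions Setoid Classical Eqdep.

(* Two facts about the subbase of X drive the proof.  First, the complement
   of a subbasic set X \ (a] or X \ [a) is (a] or [a), which lies inside the
   single component containing a.  Second, each component X_k is "sewn in"
   both ways: restricting a subbasic set of X to X_k gives a subbasic set of
   X_k or all of X_k, and extending a subbasic set of X_k by all other
   components gives a subbasic set of X.

   With these, (i) => (ii) follows since complements of
   subbasic sets lie in compact components, and (ii) => (i) by pulling a
   cover of X_k back from the cover of X by extended basic neighbourhoods. *)

Definition inter {T : Type} (l : list (T -> Prop)) (x : T) : Prop :=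
  forall V, In V l -> V x.

Lemma inter_cons {T : Type} (V : T -> Prop) l x :
  inter (V :: l) x <-> V x /\ inter l x.
Proof.
  split.
  - intros H. split; [apply H; left; reflexivity|intros W HW; apply H; right; exact HW].
  - intros [HV Hl] W [<-|HW]; [exact HV|exact (Hl W HW)].
Qed.

Lemma inter_map {A T : Type} (f : A -> T -> Prop) (L : list A) x :
  inter (map f L) x <-> forall V, In V L -> f V x.
Proof.
  split.
  - intros H V HV. apply H, in_map, HV.
  - intros H W HW. apply in_map_iff in HW. destruct HW as [V [<- HV]]. exact (H V HV).
Qed.

Section GeneratedTopology.

Variables (T : Type) (S : (T -> Prop) -> Prop).

Lemma union_of_basic_open (P : list (T -> Prop) -> Prop) :
  (forall l, P l -> forall V, In V l -> S V) ->
  generated_open S (fun x => exists l, P l /\ inter l x).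
Proof.
  intros HP x [l [Pl Hx]]. exists l.
  split; [exact (HP l Pl)|split; [exact Hx|]].
  intros y Hy. exists l. split; [exact Pl|exact Hy].
Qed.

Definition finitely_covered (A : T -> Prop) : Prop :=
  forall (I : Type) (U : I -> T -> Prop),
    (forall i, generated_open S (U i)) ->
    (forall x, exists i, U i x) ->
    exists l : list I, forall x, A x -> exists i, In i l /\ U i x.

Lemma finitely_covered_mono (A B : T -> Prop) :
  (forall x, A x -> B x) -> finitely_covered B -> finitely_covered A.
Proof.
  intros HAB HB I U HUo Hcov. destruct (HB I U HUo Hcov) as [l Hl].
  exists l. intros x Hx. exact (Hl x (HAB x Hx)).
Qed.

(* Compactness from subbasic complements: a point x0 has a basic
   neighbourhood inside one member of the cover, and the complement of that
   neighbourhood is the finite union of the complements of its subbasic sets. *)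
Lemma compact_of_subbasic_complements :
  (forall V, S V -> finitely_covered (fun x => ~ V x)) ->
  compact (generated_open S).
Proof.
  intros Hfin I U HUo Hcov.
  destruct (classic (inhabited T)) as [[x0]|Hempty].
  2: { exists nil. intros x. exfalso. apply Hempty. constructor. exact x. }
  destruct (Hcov x0) as [i0 Hi0].
  destruct (HUo i0 x0 Hi0) as [L [HLS [_ HLU]]].
  assert (Hout : exists l, forall x, ~ inter L x -> exists i, In i l /\ U i x).
  { clear HLU. induction L as [|V L IH].
    - exists nil. intros x Hx. exfalso. apply Hx. intros V [].
    - destruct IH as [l Hl]. { intros W HW. apply HLS. right. exact HW. }
      destruct (Hfin V (HLS V (or_introl eq_refl)) I U HUo Hcov) as [lV HlV].
      exists (lV ++ l). intros x Hx.
      destruct (classic (V x)) as [HVx|HVx].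
      + destruct (Hl x) as [i [Hi HUi]].
        { intros HLx. apply Hx, inter_cons. split; assumption. }
        exists i. split; [apply in_or_app; right; exact Hi|exact HUi].
      + destruct (HlV x HVx) as [i [Hi HUi]].
        exists i. split; [apply in_or_app; left; exact Hi|exact HUi]. }
  destruct Hout as [l Hl]. exists (i0 :: l). intros x.
  destruct (classic (inter L x)) as [HLx|HLx].
  - exists i0. split; [left; reflexivity|exact (HLU x HLx)].
  - destruct (Hl x HLx) as [i [Hi HUi]]. exists i. split; [right; exact Hi|exact HUi].
Qed.

End GeneratedTopology.

Arguments finitely_covered {T}.
Arguments finitely_covered_mono {T S}.

Section Pullback.

Variables (Y T : Type) (SY : (Y -> Prop) -> Prop) (ST : (T -> Prop) -> Prop).
Variable f : Y -> T.

Hypothesis subbasic_pullback :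
  forall V, ST V -> SY (fun y => V (f y)) \/ forall y, V (f y).

Lemma basic_pullback (l : list (T -> Prop)) :
  (forall V, In V l -> ST V) ->
  exists l', (forall V, In V l' -> SY V) /\ forall y, inter l' y <-> inter l (f y).
Proof.
  induction l as [|V l IH]; intros HS.
  - exists nil. split; [intros V []|]. intros y. split; intros _ V [].
  - destruct IH as [l' [HS' Heq]]. { intros W HW. apply HS. right. exact HW. }
    destruct (subbasic_pullback V (HS V (or_introl eq_refl))) as [HV|HV].
    + exists ((fun y => V (f y)) :: l'). split.
      * intros W [<-|HW]; [exact HV|exact (HS' W HW)].
      * intros y. rewrite !inter_cons, Heq. reflexivity.
    + exists l'. split; [exact HS'|]. intros y. rewrite inter_cons, Heq.
      specialize (HV y). tauto.
Qed.

Lemma generated_open_pullback (U : T -> Prop) :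
  generated_open ST U -> generated_open SY (fun y => U (f y)).
Proof.
  intros HU y Hy. destruct (HU (f y) Hy) as [l [HlS [Hly HlU]]].
  destruct (basic_pullback l HlS) as [l' [Hl'S Heq]].
  exists l'. split; [exact Hl'S|split].
  - apply (proj2 (Heq y)). exact Hly.
  - intros z Hz. apply HlU. apply (proj1 (Heq z)). exact Hz.
Qed.

End Pullback.

Section DisjointUnion.

Variables (K : Type) (X : K -> Type) (le : forall k, X k -> X k -> Prop).

Lemma sum_le_same k (x y : X k) :
  sum_le le (existT X k x) (existT X k y) <-> le k x y.
Proof.
  split.
  - intros [e H]. simpl in *. rewrite <- eq_rect_eq in H. exact H.
  - intros H. exists eq_refl. exact H.
Qed.

Lemma sum_le_component (p q : {k : K & X k}) :
  sum_le le p q -> projT1 p = projT1 q.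
Proof. intros [e _]. exact e. Qed.

Lemma subbasic_complement_in_component V :
  interval_subbase (sum_le le) V -> exists m, forall p, ~ V p -> projT1 p = m.
Proof.
  intros [[m c] [Hc|Hc]]; exists m; intros p Hp.
  - assert (Hle : sum_le le p (existT X m c)) by (apply NNPP; intro H; apply Hp, Hc, H).
    exact (sum_le_component _ _ Hle).
  - assert (Hle : sum_le le (existT X m c) p) by (apply NNPP; intro H; apply Hp, Hc, H).
    symmetry. exact (sum_le_component _ _ Hle).
Qed.

(* Restricting a subbasic set of X to X_m gives a subbasic set of X_m, or all
   of X_m when the defining point lies in another component. *)
Lemma restrict_subbasic m V :
  interval_subbase (sum_le le) V ->
  interval_subbase (le m) (fun z => V (existT X m z)) \/ forall z, V (existT X m z).
Proof.
  intros [[m' c] Hc]. destruct (classic (m' = m)) as [<-|Hne].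
  - left. exists c.
    destruct Hc as [Hc|Hc]; [left|right]; intros z; rewrite Hc, sum_le_same; reflexivity.
  - right. intros z.
    destruct Hc as [Hc|Hc]; apply Hc; intros Hle; apply sum_le_component in Hle;
      simpl in Hle; congruence.
Qed.

Lemma restrict_open m U :
  interval_open (sum_le le) U -> interval_open (le m) (fun z => U (existT X m z)).
Proof. apply generated_open_pullback. apply restrict_subbasic. Qed.

Lemma component_finitely_covered m :
  compact (interval_open (le m)) ->
  finitely_covered (interval_subbase (sum_le le)) (fun p => projT1 p = m).
Proof.
  intros Hm I U HUo Hcov.
  destruct (Hm I (fun i z => U i (existT X m z))) as [l Hl].
  - intros i. apply restrict_open, HUo.
  - intros z. apply Hcov.
  - exists l. intros [m' z] E. simpl in E. subst m'. apply Hl.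
Qed.

Lemma sum_compact :
  (forall k, compact (interval_open (le k))) -> compact (interval_open (sum_le le)).
Proof.
  intros Hc. apply compact_of_subbasic_complements. intros V HV.
  destruct (subbasic_complement_in_component V HV) as [m Hm].
  apply (finitely_covered_mono _ (fun p => projT1 p = m) Hm).
  apply component_finitely_covered, Hc.
Qed.

(* Extension of a set V of X_k to X: V on X_k, every point elsewhere. *)
Definition extend k (V : X k -> Prop) (p : {k : K & X k}) : Prop :=
  forall z, p = existT X k z -> V z.

Lemma extend_at k (V : X k -> Prop) z : extend k V (existT X k z) <-> V z.
Proof.
  split.
  - intros H. apply H. reflexivity.
  - intros H z' E. apply inj_pair2 in E. subst z'. exact H.
Qed.

Lemma extend_outside k (V : X k -> Prop) p : projT1 p <> k -> extend k V p.
Proof. intros H z E. subst p. simpl in H. congruence. Qed.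

Lemma extend_characterization k (P : X k -> Prop) (Q : {k : K & X k} -> Prop) :
  (forall z, P z <-> Q (existT X k z)) ->
  (forall p, projT1 p <> k -> Q p) ->
  forall p, extend k P p <-> Q p.
Proof.
  intros HP Hout [m w]. destruct (classic (m = k)) as [->|Hne].
  - rewrite extend_at. apply HP.
  - split; intros _; [apply Hout|apply extend_outside]; exact Hne.
Qed.

(* The extension of X_k \ (a] is X \ (a], and likewise for [a). *)
Lemma extend_subbasic k V :
  interval_subbase (le k) V -> interval_subbase (sum_le le) (extend k V).
Proof.
  intros [a [Ha|Ha]]; exists (existT X k a); [left|right];
    apply extend_characterization; try (intros z; rewrite Ha, sum_le_same; reflexivity);
    intros p Hp Hle; apply Hp; apply sum_le_component in Hle; simpl in Hle.
  - exact Hle.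
  - symmetry. exact Hle.
Qed.

(* (ii) => (i): cover X by the extensions of the basic neighbourhoods that
   lie inside members of a cover of X_k; these are open in X. *)
Lemma component_compact k :
  inhabited (X k) -> compact (interval_open (sum_le le)) -> compact (interval_open (le k)).
Proof.
  intros [x0] Hc I U HUo Hcov.
  pose (W := fun i p => exists l,
    (exists L, l = map (extend k) L /\
      (forall V, In V L -> interval_subbase (le k) V) /\ (forall z, inter L z -> U i z))
    /\ inter l p).
  assert (Hbasic : forall z, exists i L, (forall V, In V L -> interval_subbase (le k) V)
    /\ (forall y, inter L y -> U i y) /\ inter L z).
  { intros z. destruct (Hcov z) as [i Hi]. destruct (HUo i z Hi) as [L [HLS [HLz HLU]]].
    exists i, L. auto. }
  destruct (Hc I W) as [l Hl].
  - intros i. apply union_of_basic_open. intros l' [L [-> [HLS _]]] V HV.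
    apply in_map_iff in HV. destruct HV as [V0 [<- HV0]].
    apply extend_subbasic, HLS, HV0.
  - intros [m w]. destruct (classic (m = k)) as [->|Hne];
      [destruct (Hbasic w) as [i [L [HLS [HLU HLz]]]]
      |destruct (Hbasic x0) as [i [L [HLS [HLU HLz]]]]];
      exists i, (map (extend k) L); (split; [exists L; auto|]);
      apply inter_map; intros V HV.
    + apply extend_at, HLz, HV.
    + apply extend_outside. exact Hne.
  - exists l. intros z. destruct (Hl (existT X k z)) as [i [Hi [l' [[L [-> [_ HLU]]] Hz]]]].
    exists i. split; [exact Hi|]. apply HLU. intros V HV.
    apply (proj1 (extend_at k V z)). apply (proj1 (inter_map _ _ _) Hz), HV.
Qed.

End DisjointUnion.

Theorem lemma2p1 (K : Type) (X : K -> Type)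
  (le : forall k, X k -> X k -> Prop)
  (Hord : forall k, order (X k) (le k))
  (Hne : forall k, inhabited (X k)) :
  (forall k, compact (interval_open (le k))) <->
  compact (interval_open (@sum_le K X le)).
Proof.
  split.
  - apply sum_compact.
  - intros Hc k. apply component_compact; [apply Hne|exact Hc].
Qed.
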